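(* Let $S^0$ be a left ample adequate semigroup with semilattice of idempotents $E^0$, and let $I=\bigcup_{x\in E^0}L_x$ be a left regular band with semilattice transversal $E^0$. Suppose there is a left action $S^0\times I\to I$, $(x,e)\mapsto x\ast e$ (so $(xy)\ast e=x\ast(y\ast e)$), distributive over the multiplication of $I$ (so $x\ast(ef)=(x\ast e)(x\ast f)$), satisfying: 1. for all $x,y\in S^0$, $x\ast y^+=(xy)^+$; 2. if $x,x_1,x_2\in S^0$, $e_1\in L_{x_1^+}$, $e_2\in L_{x_2^+}$ and $x^+(x\ast e_1)=x^+(x\ast e_2)$ and $xx_1=xx_2$, then $x^\ast\ast e_1=x^\ast\ast e_2$ and $x^\ast x_1=x^\ast x_2$. Define on $W=\{(e,x)\in I\times S^0: e\in L_{x^+}\}$ the multiplication $(e,x)(g,y)=(e(x\ast g),xy)$. Then $W$ is a left adequate, quasi-adequate semigroup with an admissible, left ample, adequate transversal isomorphic to $S^0$. If in addition 3. $x^+\ast e=x^+e$ for all $e\in I$, $x\in S^0$, then $I(W)\cong I$. Moreover every left adequate, quasi-adequate semigroup with a left ample, admissible adequate transversal can be constructed (up to isomorphism) in this way.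
   Context: For a semigroup $S$, $S^1$ is $S$ with an identity adjoined, $E(S)$ its idempotents, $\mathcal{L},\mathcal{R}$ Green's relations. $\mathcal{R}^\ast=\{(a,b):\forall x,y\in S^1,\ xa=ya\iff xb=yb\}$, $\mathcal{L}^\ast=\{(a,b):\forall x,y\in S^1,\ ax=ay\iff bx=by\}$. $S$ is abundant if each $\mathcal{R}^\ast$- and $\mathcal{L}^\ast$-class contains an idempotent; adequate if also idempotents commute (then $a^+$, $a^\ast$ are the unique idempotents $\mathcal{R}^\ast$-, resp. $\mathcal{L}^\ast$-related to $a$); left adequate if abundant and each $\mathcal{R}^\ast$-class contains a unique idempotent. An adequate semigroup $T$ is left ample if $ae=(ae)^+a$ for all $a\in T$, $e\in E(T)$. An abundant subsemigroup $U$ of abundant $S$ is a $\ast$-subsemigroup if $\mathcal{L}^\ast(U)=\mathcal{L}^\ast(S)\cap(U\times U)$, $\mathcal{R}^\ast(U)=\mathcal{R}^\ast(S)\cap(U\times U)$. An adequate $\ast$-subsemigroup $S^0$ of abundant $S$ is an adequate transversal if each $x\in S$ has a unique $\overline{x}\in S^0$ and idempotents $e,f$ (then unique, written $e_x,f_x$) with $x=e\overline{x}f$, $e\,\mathcal{L}\,\overline{x}^+$, $f\,\mathcal{R}\,\overline{x}^\ast$; $I(S)=\{e_x:x\in S\}$. Quasi-adequate: abundant with $E(S)$ a subsemigroup; the transversal is admissible if $\overline{xy}=\overline{x}\,\overline{y}$ for all $x,y$. A left regular band satisfies $xyx=xy$; $E^0$ is a semilattice transversal of $I$ if it is a subsemilattice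 of $I$ and each element of $I$ has exactly one inverse in $E^0$. For $x\in E^0$, $L_x$ is the $\mathcal{L}$-class of $x$ in $I$. *)

(* A semigroup is given by a carrier type T, a binary operation mul, and a
   carrier predicate P : T -> Prop (the subset on which we work; the whole
   type for an ordinary semigroup, a subset for subsemigroups / for W). *)

Set Implicit Arguments.

Definition allT {T : Type} (_ : T) : Prop := True.

(* S^1: adjoin an identity, modelled by option T (None = adjoined 1). *)
Definition opt_in {T : Type} (P : T -> Prop) (o : option T) : Prop :=
  match o with None => True | Some x => P x end.
Definition lmul1 {T : Type} (mul : T -> T -> T) (o : option T) (a : T) : T :=
  match o with None => a | Some x => mul x a end.
Definition rmul1 {T : Type} (mul : T -> T -> T) (a : T) (o : option T) : T :=
  match o with None => a | Some x => mul a x end.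

Definition closed_on {T : Type} (P : T -> Prop) (mul : T -> T -> T) : Prop :=
  forall a b, P a -> P b -> P (mul a b).
Definition assoc_on {T : Type} (P : T -> Prop) (mul : T -> T -> T) : Prop :=
  forall a b c, P a -> P b -> P c -> mul (mul a b) c = mul a (mul b c).

Definition idem {T : Type} (mul : T -> T -> T) (e : T) : Prop := mul e e = e.

Definition Lgreen {T : Type} (P : T -> Prop) (mul : T -> T -> T) (a b : T) : Prop :=
  exists x y, opt_in P x /\ opt_in P y /\ a = lmul1 mul x b /\ b = lmul1 mul y a.
Definition Rgreen {T : Type} (P : T -> Prop) (mul : T -> T -> T) (a b : T) : Prop :=
  exists x y, opt_in P x /\ opt_in P y /\ a = rmul1 mul b x /\ b = rmul1 mul a y.

Definition Rstar {T : Type} (P : T -> Prop) (mul : T -> T -> T) (a b : T) : Prop :=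
  forall x y, opt_in P x -> opt_in P y ->
    (lmul1 mul x a = lmul1 mul y a <-> lmul1 mul x b = lmul1 mul y b).
Definition Lstar {T : Type} (P : T -> Prop) (mul : T -> T -> T) (a b : T) : Prop :=
  forall x y, opt_in P x -> opt_in P y ->
    (rmul1 mul a x = rmul1 mul a y <-> rmul1 mul b x = rmul1 mul b y).

Definition abundant {T : Type} (P : T -> Prop) (mul : T -> T -> T) : Prop :=
  forall a, P a ->
    (exists e, P e /\ idem mul e /\ Rstar P mul a e) /\
    (exists f, P f /\ idem mul f /\ Lstar P mul a f).

Definition adequate {T : Type} (P : T -> Prop) (mul : T -> T -> T) : Prop :=
  abundant P mul /\
  forall e f, P e -> P f -> idem mul e -> idem mul f -> mul e f = mul f e.

Definition left_adequate {T : Type} (P : T -> Prop) (mul : T -> T -> T) : Prop :=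
  abundant P mul /\
  forall a e f, P a -> P e -> P f -> idem mul e -> idem mul f ->
    Rstar P mul a e -> Rstar P mul a f -> e = f.

Definition is_plus {T : Type} (P : T -> Prop) (mul : T -> T -> T) (a p : T) : Prop :=
  P p /\ idem mul p /\ Rstar P mul a p.
Definition is_star {T : Type} (P : T -> Prop) (mul : T -> T -> T) (a q : T) : Prop :=
  P q /\ idem mul q /\ Lstar P mul a q.

Definition left_ample {T : Type} (P : T -> Prop) (mul : T -> T -> T) : Prop :=
  adequate P mul /\
  forall a e p, P a -> P e -> idem mul e -> is_plus P mul (mul a e) p ->
    mul a e = mul p a.

Definition quasi_adequate {T : Type} (P : T -> Prop) (mul : T -> T -> T) : Prop :=
  abundant P mul /\
  forall e f, P e -> P f -> idem mul e -> idem mul f -> idem mul (mul e f).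

Definition star_subsemigroup {T : Type} (P : T -> Prop) (mul : T -> T -> T)
    (U : T -> Prop) : Prop :=
  (forall a, U a -> P a) /\ closed_on U mul /\ abundant U mul /\
  forall a b, U a -> U b ->
    (Lstar U mul a b <-> Lstar P mul a b) /\ (Rstar U mul a b <-> Rstar P mul a b).

Definition tdecomp {T : Type} (P : T -> Prop) (mul : T -> T -> T) (U : T -> Prop)
    (x xb e f : T) : Prop :=
  U xb /\ P e /\ P f /\ idem mul e /\ idem mul f /\ x = mul (mul e xb) f /\
  (exists p, is_plus U mul xb p /\ Lgreen P mul e p) /\
  (exists q, is_star U mul xb q /\ Rgreen P mul f q).

Definition is_bar {T : Type} (P : T -> Prop) (mul : T -> T -> T) (U : T -> Prop)
    (x xb : T) : Prop :=
  exists e f, tdecomp P mul U x xb e f.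

Definition adequate_transversal {T : Type} (P : T -> Prop) (mul : T -> T -> T)
    (U : T -> Prop) : Prop :=
  star_subsemigroup P mul U /\ adequate U mul /\
  forall x, P x -> exists xb, is_bar P mul U x xb /\
    forall xb', is_bar P mul U x xb' -> xb' = xb.

Definition admissible {T : Type} (P : T -> Prop) (mul : T -> T -> T)
    (U : T -> Prop) : Prop :=
  forall x y xb yb, P x -> P y -> is_bar P mul U x xb -> is_bar P mul U y yb ->
    is_bar P mul U (mul x y) (mul xb yb).

Definition I_set {T : Type} (P : T -> Prop) (mul : T -> T -> T) (U : T -> Prop)
    (e : T) : Prop :=
  exists x xb f, P x /\ tdecomp P mul U x xb e f.

Definition iso_onto {A B : Type} (mulA : A -> A -> A) (Q : B -> Prop)
    (mulB : B -> B -> B) : Prop :=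
  exists phi : A -> B,
    (forall a, Q (phi a)) /\
    (forall a a', phi a = phi a' -> a = a') /\
    (forall b, Q b -> exists a, phi a = b) /\
    (forall a a', phi (mulA a a') = mulB (phi a) (phi a')).

Definition left_regular_band {T : Type} (mul : T -> T -> T) : Prop :=
  assoc_on allT mul /\ (forall x, idem mul x) /\
  (forall x y, mul (mul x y) x = mul x y).

Definition inverse_of {T : Type} (mul : T -> T -> T) (a b : T) : Prop :=
  mul (mul a b) a = a /\ mul (mul b a) b = b.

(* Construction data: S^0 = (T0, mul0) left ample (adequate) with semilattice of
   idempotents E^0 = E(S^0), embedded in the left regular band I = (TI, mulI) via
   iota; act x e is x * e. *)
Definition construction_data (T0 : Type) (mul0 : T0 -> T0 -> T0)
    (TI : Type) (mulI : TI -> TI -> TI) (iota : T0 -> TI)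
    (act : T0 -> TI -> TI) : Prop :=
  assoc_on allT mul0 /\ left_ample allT mul0 /\
  left_regular_band mulI /\
  (forall e f, idem mul0 e -> idem mul0 f -> iota (mul0 e f) = mulI (iota e) (iota f)) /\
  (forall e f, idem mul0 e -> idem mul0 f -> iota e = iota f -> e = f) /\
  (forall a, exists e, idem mul0 e /\ inverse_of mulI a (iota e) /\
      forall e', idem mul0 e' -> inverse_of mulI a (iota e') -> e' = e) /\
  (forall a, exists e, idem mul0 e /\ Lgreen allT mulI a (iota e)) /\
  (forall x y e, act (mul0 x y) e = act x (act y e)) /\
  (forall x e f, act x (mulI e f) = mulI (act x e) (act x f)) /\
  (forall x y p q, is_plus allT mul0 y p -> is_plus allT mul0 (mul0 x y) q ->
      act x (iota p) = iota q) /\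
  (forall x x1 x2 e1 e2 p p1 p2 s,
      is_plus allT mul0 x p -> is_star allT mul0 x s ->
      is_plus allT mul0 x1 p1 -> is_plus allT mul0 x2 p2 ->
      Lgreen allT mulI e1 (iota p1) -> Lgreen allT mulI e2 (iota p2) ->
      mulI (iota p) (act x e1) = mulI (iota p) (act x e2) ->
      mul0 x x1 = mul0 x x2 ->
      act s e1 = act s e2 /\ mul0 s x1 = mul0 s x2).

Definition condition3 (T0 : Type) (mul0 : T0 -> T0 -> T0)
    (TI : Type) (mulI : TI -> TI -> TI) (iota : T0 -> TI)
    (act : T0 -> TI -> TI) : Prop :=
  forall e x p, is_plus allT mul0 x p -> act p e = mulI (iota p) e.

Definition Wpred (T0 : Type) (mul0 : T0 -> T0 -> T0)
    (TI : Type) (mulI : TI -> TI -> TI) (iota : T0 -> TI)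
    (w : TI * T0) : Prop :=
  exists p, is_plus allT mul0 (snd w) p /\ Lgreen allT mulI (fst w) (iota p).

Definition mulW (T0 : Type) (mul0 : T0 -> T0 -> T0)
    (TI : Type) (mulI : TI -> TI -> TI) (act : T0 -> TI -> TI)
    (w v : TI * T0) : TI * T0 :=
  (mulI (fst w) (act (snd w) (fst v)), mul0 (snd w) (snd v)).

(* In [W] the second components multiply as in [S^0] and the first component of a
   product ignores the second component of the right factor, so [(e, x)] is [R*]-related
   to [(e, x^+)], while condition 2 together with its converse is exactly the
   statement that [(e, x)] is [L*]-related to [((x^* )^+, x^* )].  The idempotents of [W]
   are the [(e, f)] with [f] in [E^0], whence left adequacy and quasi-adequacy, and
   [x |-> (x^+, x)] embeds [S^0] as an admissible transversal through the factorisation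
   [(e, x) = (e, x^+) (x^+, x) (x^*, x^* )].  Under condition 3, [e |-> (e, f)] with
   [e] in [L_f] identifies [I] with [I(W)].

   Conversely, for [S] with transversal [S^0] take for [I] the idempotents of [S]
   (a left regular band, since an [R*]-class holds one idempotent), let [x] act by
   [e |-> (x e)^+] and send [s] to [(s^+, s-bar)].  The left ample identity of [S^0]
   extends to [x e = (x e)^+ x] for every idempotent [e] of [S], by way of [e-bar];
   this makes the action distributive and yields condition 2. *)

From Stdlib Require Import ClassicalEpsilon ProofIrrelevance.

Set Implicit Arguments.

(** * Star relations *)

Section StarRelations.
Variables (T : Type) (P : T -> Prop) (mul : T -> T -> T).

Lemma opt_in_allT (u : option T) : opt_in allT u.
Proof. destruct u; exact I. Qed.

Lemma lmul1_mulA u a b : assoc_on P mul -> opt_in P u -> P a -> P b ->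
  lmul1 mul u (mul a b) = mul (lmul1 mul u a) b.
Proof. intros HA Hu Ha Hb; destruct u as [x|]; simpl in *; auto. symmetry; apply HA; auto. Qed.
Lemma rmul1_mulA u a b : assoc_on P mul -> opt_in P u -> P a -> P b ->
  rmul1 mul (mul a b) u = mul a (rmul1 mul b u).
Proof. intros HA Hu Ha Hb; destruct u as [x|]; simpl in *; auto. Qed.

Lemma Rstar_refl a : Rstar P mul a a.
Proof. intros x y _ _; tauto. Qed.
Lemma Rstar_sym a b : Rstar P mul a b -> Rstar P mul b a.
Proof. intros H x y Hx Hy; specialize (H x y Hx Hy); tauto. Qed.
Lemma Rstar_trans a b c : Rstar P mul a b -> Rstar P mul b c -> Rstar P mul a c.
Proof. intros H1 H2 x y Hx Hy; specialize (H1 x y Hx Hy); specialize (H2 x y Hx Hy); tauto. Qed.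

Lemma Lstar_refl a : Lstar P mul a a.
Proof. intros x y _ _; tauto. Qed.
Lemma Lstar_sym a b : Lstar P mul a b -> Lstar P mul b a.
Proof. intros H x y Hx Hy; specialize (H x y Hx Hy); tauto. Qed.
Lemma Lstar_trans a b c : Lstar P mul a b -> Lstar P mul b c -> Lstar P mul a c.
Proof. intros H1 H2 x y Hx Hy; specialize (H1 x y Hx Hy); specialize (H2 x y Hx Hy); tauto. Qed.

Lemma Rstar_cancel a b u v : Rstar P mul a b -> P u -> P v ->
  mul u a = mul v a -> mul u b = mul v b.
Proof. intros H Hu Hv. exact (proj1 (H (Some u) (Some v) Hu Hv)). Qed.
Lemma Rstar_left_unit a e u : Rstar P mul a e -> P u -> mul u a = a -> mul u e = e.
Proof. intros H Hu. exact (proj1 (H (Some u) None Hu I)). Qed.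
Lemma Rstar_idem_left a e : Rstar P mul a e -> P e -> idem mul e -> mul e a = a.
Proof. intros H He Ie. exact (Rstar_left_unit (Rstar_sym H) He Ie). Qed.

Lemma Lstar_cancel a b u v : Lstar P mul a b -> P u -> P v ->
  mul a u = mul a v -> mul b u = mul b v.
Proof. intros H Hu Hv. exact (proj1 (H (Some u) (Some v) Hu Hv)). Qed.
Lemma Lstar_right_unit a e u : Lstar P mul a e -> P u -> mul a u = a -> mul e u = e.
Proof. intros H Hu. exact (proj1 (H (Some u) None Hu I)). Qed.
Lemma Lstar_idem_right a e : Lstar P mul a e -> P e -> idem mul e -> mul a e = a.
Proof. intros H He Ie. exact (Lstar_right_unit (Lstar_sym H) He Ie). Qed.

Lemma Rstar_idem_absorb e f : Rstar P mul e f -> P e -> P f -> idem mul e -> idem mul f ->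
  mul f e = e /\ mul e f = f.
Proof.
  intros H He Hf Ie If.
  split; [exact (Rstar_idem_left H Hf If) | exact (Rstar_idem_left (Rstar_sym H) He Ie)].
Qed.
Lemma Lstar_idem_absorb e f : Lstar P mul e f -> P e -> P f -> idem mul e -> idem mul f ->
  mul e f = e /\ mul f e = f.
Proof.
  intros H He Hf Ie If.
  split; [exact (Lstar_idem_right H Hf If) | exact (Lstar_idem_right (Lstar_sym H) He Ie)].
Qed.

Lemma Rstar_plus_iff a b p q : is_plus P mul a p -> is_plus P mul b q ->
  mul p q = mul q p -> (Rstar P mul a b <-> p = q).
Proof.
  intros [Pp [Ip Hp]] [Pq [Iq Hq]] C; split.
  - intro H.
    destruct (Rstar_idem_absorb (Rstar_trans (Rstar_trans (Rstar_sym Hp) H) Hq) Pp Pq Ip Iq).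
    congruence.
  - intros <-. exact (Rstar_trans Hp (Rstar_sym Hq)).
Qed.
Lemma Lstar_star_iff a b p q : is_star P mul a p -> is_star P mul b q ->
  mul p q = mul q p -> (Lstar P mul a b <-> p = q).
Proof.
  intros [Pp [Ip Hp]] [Pq [Iq Hq]] C; split.
  - intro H.
    destruct (Lstar_idem_absorb (Lstar_trans (Lstar_trans (Lstar_sym Hp) H) Hq) Pp Pq Ip Iq).
    congruence.
  - intros <-. exact (Lstar_trans Hp (Lstar_sym Hq)).
Qed.

Lemma is_plus_unique a p q : adequate P mul -> is_plus P mul a p -> is_plus P mul a q -> p = q.
Proof.
  intros [_ C] Hp Hq. destruct (Hp) as [Pp [Ip _]]; destruct (Hq) as [Pq [Iq _]].
  apply (Rstar_plus_iff Hp Hq (C p q Pp Pq Ip Iq)), Rstar_refl.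
Qed.
Lemma is_star_unique a p q : adequate P mul -> is_star P mul a p -> is_star P mul a q -> p = q.
Proof.
  intros [_ C] Hp Hq. destruct (Hp) as [Pp [Ip _]]; destruct (Hq) as [Pq [Iq _]].
  apply (Lstar_star_iff Hp Hq (C p q Pp Pq Ip Iq)), Lstar_refl.
Qed.

Lemma Rstar_of_absorb e f : assoc_on P mul -> P e -> P f ->
  mul f e = e -> mul e f = f -> Rstar P mul e f.
Proof.
  intros HA He Hf E1 E2 x y Hx Hy; split; intro E.
  - rewrite <- E2, !(lmul1_mulA _ HA); auto; congruence.
  - rewrite <- E1, !(lmul1_mulA _ HA); auto; congruence.
Qed.

Lemma Rstar_mul_left x a b : assoc_on P mul -> closed_on P mul -> P x -> P a -> P b ->
  Rstar P mul a b -> Rstar P mul (mul x a) (mul x b).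
Proof.
  intros HA HC Hx Ha Hb H u v Hu Hv.
  rewrite !(lmul1_mulA _ HA); auto.
  assert (HP : forall w, opt_in P w -> P (lmul1 mul w x)) by (intros [w|] Hw; simpl in *; auto).
  exact (H (Some _) (Some _) (HP u Hu) (HP v Hv)).
Qed.

Lemma Lgreen_idem_iff a b : assoc_on P mul -> P a -> P b -> idem mul a -> idem mul b ->
  (Lgreen P mul a b <-> mul a b = a /\ mul b a = b).
Proof.
  intros HA Ha Hb Ia Ib; split.
  - intros [x [y [Hx [Hy [E1 E2]]]]]; split.
    + rewrite E1, <- (lmul1_mulA x HA Hx Hb Hb), Ib; reflexivity.
    + rewrite E2, <- (lmul1_mulA y HA Hy Ha Ha), Ia; reflexivity.
  - intros [E1 E2]. exists (Some a), (Some b); simpl; auto.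
Qed.

Lemma Rgreen_idem_absorb a b : assoc_on P mul -> P a -> P b -> idem mul a -> idem mul b ->
  Rgreen P mul a b -> mul b a = a /\ mul a b = b.
Proof.
  intros HA Ha Hb Ia Ib [x [y [Hx [Hy [E1 E2]]]]]; split.
  - rewrite E1, <- (rmul1_mulA x HA Hx Hb Hb), Ib; reflexivity.
  - rewrite E2, <- (rmul1_mulA y HA Hy Ha Ha), Ia; reflexivity.
Qed.

(** A common right identity [r] in [P] stands in for the adjoined identity. *)
Lemma Lstar_of_right_unit a b r : P r -> mul a r = a -> mul b r = b ->
  (forall u v, P u -> P v -> (mul a u = mul a v <-> mul b u = mul b v)) ->
  Lstar P mul a b.
Proof.
  intros Hr Ea Eb H u v Hu Hv.
  assert (K : forall c w, mul c r = c ->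
             rmul1 mul c w = mul c (match w with Some t => t | None => r end))
    by (intros c [t|] Ec; simpl; auto).
  rewrite !(K a), !(K b) by assumption.
  apply H; [destruct u | destruct v]; simpl in *; auto.
Qed.

End StarRelations.

Section Transversal.
Variables (T : Type) (P : T -> Prop) (mul : T -> T -> T) (U : T -> Prop).
Hypothesis HA : assoc_on P mul.
Hypothesis U_sub : forall u, U u -> P u.

Lemma tdecomp_intro x xb e p q : U xb -> P e -> idem mul e ->
  is_plus U mul xb p -> is_star U mul xb q -> mul e p = e -> mul p e = p -> x = mul e xb ->
  tdecomp P mul U x xb e q.
Proof.
  intros Uxb Pe Ie [Up [Ip Hp]] [Uq [Iq Hq]] E1 E2 Ex.
  do 5 (split; auto).
  split; [rewrite Ex, HA, (Lstar_idem_right Hq Uq Iq); auto|].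
  split.
  - exists p; split; [split; [|split]; assumption|]. apply Lgreen_idem_iff; auto.
  - exists q; split; [split; [|split]; assumption|]. exists None, None; simpl; auto.
Qed.

Lemma tdecomp_absorb x xb e f : tdecomp P mul U x xb e f ->
  exists p q, is_plus U mul xb p /\ is_star U mul xb q /\
    mul e p = e /\ mul p e = p /\ mul q f = f /\ mul f q = q.
Proof.
  intros [_ [Pe [Pf [Ie [If [_ [[p [Hp Lp]] [q [Hq Rq]]]]]]]]].
  exists p, q. split; [exact Hp|]. split; [exact Hq|].
  destruct Hp as [Up [Ip _]]; destruct Hq as [Uq [Iq _]].
  apply Lgreen_idem_iff in Lp; auto.
  destruct (Rgreen_idem_absorb HA Pf (U_sub Uq) If Iq Rq). tauto.
Qed.

End Transversal.

(** * Transport along isomorphisms *)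

Section Transport.
Context {A B : Type} {mA : A -> A -> A} {Q : B -> Prop} {mB : B -> B -> B} {phi : A -> B}.
Hypothesis phi_Q : forall a, Q (phi a).
Hypothesis phi_inj : forall a a', phi a = phi a' -> a = a'.
Hypothesis phi_onto : forall b, Q b -> exists a, phi a = b.
Hypothesis phi_mul : forall a a', phi (mA a a') = mB (phi a) (phi a').

Let opt_in_image u : opt_in Q u -> exists u', u = option_map phi u'.
Proof.
  destruct u as [b|]; simpl; intro H.
  - destruct (phi_onto H) as [a Ha]; exists (Some a); simpl; congruence.
  - exists None; reflexivity.
Qed.
Let opt_in_map u : opt_in Q (option_map phi u).
Proof. destruct u; simpl; auto. Qed.
Let lmul1_map u a : lmul1 mB (option_map phi u) (phi a) = phi (lmul1 mA u a).
Proof. destruct u; simpl; auto. Qed.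
Let rmul1_map u a : rmul1 mB (phi a) (option_map phi u) = phi (rmul1 mA a u).
Proof. destruct u; simpl; auto. Qed.
Let phi_eq a a' : phi a = phi a' <-> a = a'.
Proof. split; [apply phi_inj | intros ->; reflexivity]. Qed.

Lemma Rstar_transport a b : Rstar allT mA a b <-> Rstar Q mB (phi a) (phi b).
Proof.
  split; intros H x y Hx Hy.
  - destruct (opt_in_image _ Hx) as [x' ->]; destruct (opt_in_image _ Hy) as [y' ->].
    rewrite !lmul1_map, !phi_eq. apply H; apply opt_in_allT.
  - specialize (H (option_map phi x) (option_map phi y) (opt_in_map _) (opt_in_map _)).
    rewrite !lmul1_map, !phi_eq in H. exact H.
Qed.
Lemma Lstar_transport a b : Lstar allT mA a b <-> Lstar Q mB (phi a) (phi b).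
Proof.
  split; intros H x y Hx Hy.
  - destruct (opt_in_image _ Hx) as [x' ->]; destruct (opt_in_image _ Hy) as [y' ->].
    rewrite !rmul1_map, !phi_eq. apply H; apply opt_in_allT.
  - specialize (H (option_map phi x) (option_map phi y) (opt_in_map _) (opt_in_map _)).
    rewrite !rmul1_map, !phi_eq in H. exact H.
Qed.
Lemma idem_transport a : idem mA a <-> idem mB (phi a).
Proof. unfold idem; rewrite <- phi_mul, phi_eq; reflexivity. Qed.

Lemma is_plus_transport a p : is_plus allT mA a p <-> is_plus Q mB (phi a) (phi p).
Proof.
  unfold is_plus; rewrite idem_transport, Rstar_transport.
  split; intros [_ H]; split; auto; exact I.
Qed.
Lemma is_star_transport a p : is_star allT mA a p <-> is_star Q mB (phi a) (phi p).
Proof.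
  unfold is_star; rewrite idem_transport, Lstar_transport.
  split; intros [_ H]; split; auto; exact I.
Qed.

Lemma abundant_transport : abundant allT mA <-> abundant Q mB.
Proof.
  split; intro H.
  - intros b Hb. destruct (phi_onto Hb) as [a <-].
    destruct (H a I) as [[e He] [f Hf]].
    split; [exists (phi e) | exists (phi f)].
    + apply is_plus_transport; exact He.
    + apply is_star_transport; exact Hf.
  - intros a _. destruct (H (phi a) (phi_Q a)) as [[e He] [f Hf]].
    destruct (phi_onto (proj1 He)) as [e' <-]; destruct (phi_onto (proj1 Hf)) as [f' <-].
    split; [exists e' | exists f'].
    + apply is_plus_transport; exact He.
    + apply is_star_transport; exact Hf.
Qed.
Lemma adequate_transport : adequate allT mA <-> adequate Q mB.
Proof.
  unfold adequate; rewrite abundant_transport.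
  split; intros [Hab C]; split; auto.
  - intros e f He Hf Ie If. destruct (phi_onto He) as [e' <-]; destruct (phi_onto Hf) as [f' <-].
    rewrite <- !phi_mul; f_equal. rewrite <- idem_transport in Ie, If. apply C; auto; exact I.
  - intros e f _ _ Ie If. apply phi_inj. rewrite !phi_mul.
    rewrite idem_transport in Ie, If. apply C; auto.
Qed.
Lemma left_ample_transport : left_ample allT mA <-> left_ample Q mB.
Proof.
  unfold left_ample; rewrite adequate_transport.
  split; intros [Had H]; split; auto.
  - intros b e p Hb He Ie Hp.
    destruct (phi_onto Hb) as [a <-]; destruct (phi_onto He) as [e' <-].
    destruct (phi_onto (proj1 Hp)) as [p' <-].
    rewrite <- !phi_mul; f_equal.
    rewrite <- phi_mul, <- is_plus_transport in Hp. rewrite <- idem_transport in Ie.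
    apply H; auto; exact I.
  - intros a e p _ _ Ie Hp. apply phi_inj. rewrite !phi_mul.
    rewrite idem_transport in Ie. rewrite is_plus_transport, phi_mul in Hp.
    apply H; auto.
Qed.

End Transport.

(** * The semigroup [W] *)

Section Construction.
Variables (T0 : Type) (mul0 : T0 -> T0 -> T0) (TI : Type) (mulI : TI -> TI -> TI)
  (iota : T0 -> TI) (act : T0 -> TI -> TI).
Hypothesis mul0A : assoc_on allT mul0.
Hypothesis S0_left_ample : left_ample allT mul0.
Hypothesis mulIA : assoc_on allT mulI.
Hypothesis mulI_idem : forall e, idem mulI e.
Hypothesis iota_mul : forall e f, idem mul0 e -> idem mul0 f ->
  iota (mul0 e f) = mulI (iota e) (iota f).
Hypothesis iota_inj : forall e f, idem mul0 e -> idem mul0 f -> iota e = iota f -> e = f.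
Hypothesis I_L_classes : forall a, exists e, idem mul0 e /\ Lgreen allT mulI a (iota e).
Hypothesis act_mul : forall x y e, act (mul0 x y) e = act x (act y e).
Hypothesis act_mulI : forall x e f, act x (mulI e f) = mulI (act x e) (act x f).
Hypothesis act_plus : forall x y p q, is_plus allT mul0 y p -> is_plus allT mul0 (mul0 x y) q ->
  act x (iota p) = iota q.
Hypothesis act_cancel : forall x x1 x2 e1 e2 p p1 p2 s,
  is_plus allT mul0 x p -> is_star allT mul0 x s ->
  is_plus allT mul0 x1 p1 -> is_plus allT mul0 x2 p2 ->
  Lgreen allT mulI e1 (iota p1) -> Lgreen allT mulI e2 (iota p2) ->
  mulI (iota p) (act x e1) = mulI (iota p) (act x e2) -> mul0 x x1 = mul0 x x2 ->
  act s e1 = act s e2 /\ mul0 s x1 = mul0 s x2.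

Local Notation "x ** y" := (mul0 x y) (at level 40, left associativity).
Local Notation "e <.> f" := (mulI e f) (at level 40, left associativity).
Local Notation W := (Wpred mul0 mulI iota).
Local Notation mW := (mulW mul0 mulI act).

Let mul0_assoc x y z : x ** y ** z = x ** (y ** z).
Proof. apply mul0A; exact I. Qed.
Let mulI_assoc e f g : e <.> f <.> g = e <.> (f <.> g).
Proof. apply mulIA; exact I. Qed.

Lemma S0_adequate : adequate allT mul0.
Proof. exact (proj1 S0_left_ample). Qed.

Definition plus0 (x : T0) : T0 :=
  proj1_sig (constructive_indefinite_description _ (proj1 (proj1 S0_adequate x I))).
Definition star0 (x : T0) : T0 :=
  proj1_sig (constructive_indefinite_description _ (proj2 (proj1 S0_adequate x I))).

Lemma plus0_spec x : is_plus allT mul0 x (plus0 x).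
Proof. unfold plus0; destruct (constructive_indefinite_description _ _) as [p Hp]; exact Hp. Qed.
Lemma star0_spec x : is_star allT mul0 x (star0 x).
Proof. unfold star0; destruct (constructive_indefinite_description _ _) as [p Hp]; exact Hp. Qed.

Lemma plus0_idem x : idem mul0 (plus0 x). Proof. apply plus0_spec. Qed.
Lemma star0_idem x : idem mul0 (star0 x). Proof. apply star0_spec. Qed.
Lemma plus0_mul x : plus0 x ** x = x.
Proof. destruct (plus0_spec x) as [_ [Ip Hp]]. exact (Rstar_idem_left Hp I Ip). Qed.
Lemma mul_star0 x : x ** star0 x = x.
Proof. destruct (star0_spec x) as [_ [Ip Hp]]. exact (Lstar_idem_right Hp I Ip). Qed.

Lemma idem0_comm e f : idem mul0 e -> idem mul0 f -> e ** f = f ** e.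
Proof. intros; apply (proj2 S0_adequate); auto; exact I. Qed.
Lemma idem0_mul e f : idem mul0 e -> idem mul0 f -> idem mul0 (e ** f).
Proof.
  intros Ie If; unfold idem.
  transitivity (e ** (f ** e) ** f); [rewrite !mul0_assoc; reflexivity|].
  rewrite <- (idem0_comm Ie If), <- mul0_assoc, Ie, mul0_assoc, If; reflexivity.
Qed.

Lemma plus0_unique x p : is_plus allT mul0 x p -> p = plus0 x.
Proof. intro Hp. exact (is_plus_unique S0_adequate Hp (plus0_spec x)). Qed.
Lemma star0_unique x p : is_star allT mul0 x p -> p = star0 x.
Proof. intro Hp. exact (is_star_unique S0_adequate Hp (star0_spec x)). Qed.
Lemma plus0_of_idem e : idem mul0 e -> plus0 e = e.
Proof. intro Ie; symmetry; apply plus0_unique. split; [exact I|split; auto]. apply Rstar_refl. Qed.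
Lemma star0_of_idem e : idem mul0 e -> star0 e = e.
Proof. intro Ie; symmetry; apply star0_unique. split; [exact I|split; auto]. apply Lstar_refl. Qed.

Lemma plus0_mul_absorb x y : plus0 x ** plus0 (x ** y) = plus0 (x ** y).
Proof.
  destruct (plus0_spec (x ** y)) as [_ [_ Hp]].
  apply (Rstar_left_unit (plus0 x) Hp I). rewrite <- mul0_assoc, plus0_mul; reflexivity.
Qed.

Lemma Rstar0_iff x y : Rstar allT mul0 x y <-> plus0 x = plus0 y.
Proof. apply Rstar_plus_iff; try apply plus0_spec. apply idem0_comm; apply plus0_idem. Qed.
Lemma Lstar0_iff x y : Lstar allT mul0 x y <-> star0 x = star0 y.
Proof. apply Lstar_star_iff; try apply star0_spec. apply idem0_comm; apply star0_idem. Qed.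

Definition iplus (x : T0) : TI := iota (plus0 x).

Lemma act_iplus x y : act x (iplus y) = iplus (x ** y).
Proof. exact (act_plus (plus0_spec y) (plus0_spec (x ** y))). Qed.
Lemma iplus_plus0 x : iplus (plus0 x) = iplus x.
Proof. unfold iplus; rewrite plus0_of_idem by apply plus0_idem; reflexivity. Qed.
Lemma iplus_absorb_l x y : iplus x <.> iplus (x ** y) = iplus (x ** y).
Proof.
  unfold iplus; rewrite <- iota_mul by apply plus0_idem.
  rewrite plus0_mul_absorb; reflexivity.
Qed.
Lemma iplus_absorb_r x y : iplus (x ** y) <.> iplus x = iplus (x ** y).
Proof.
  unfold iplus; rewrite <- iota_mul by apply plus0_idem.
  rewrite <- idem0_comm by apply plus0_idem. rewrite plus0_mul_absorb; reflexivity.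
Qed.

(** [Lplus a x] says that [a] lies in the L-class [L_(x^+)] of [I]. *)
Definition Lplus (a : TI) (x : T0) : Prop := a <.> iplus x = a /\ iplus x <.> a = iplus x.

Lemma Lplus_iff a x : Lgreen allT mulI a (iplus x) <-> Lplus a x.
Proof. apply Lgreen_idem_iff; auto; exact I. Qed.
Lemma W_iff w : W w <-> Lplus (fst w) (snd w).
Proof.
  split.
  - intros [p [Hp HL]]. rewrite (plus0_unique Hp) in HL. apply Lplus_iff; exact HL.
  - intro H; exists (plus0 (snd w)); split; [apply plus0_spec | apply Lplus_iff; exact H].
Qed.

Lemma mulI_absorb_trans a b c : a <.> c = a -> c <.> b = c -> a <.> b = a.
Proof. intros E1 E2. rewrite <- E1, mulI_assoc, E2; reflexivity. Qed.

Lemma Lplus_iplus x : Lplus (iplus x) x.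
Proof. split; apply mulI_idem. Qed.
Lemma Lplus_plus0 a x : Lplus a x -> Lplus a (plus0 x).
Proof. unfold Lplus; rewrite iplus_plus0; auto. Qed.
Lemma Lplus_act x y g : Lplus g y -> Lplus (act x g) (x ** y).
Proof. intros [E1 E2]; split; rewrite <- act_iplus, <- act_mulI; congruence. Qed.
Lemma Lplus_mulW e x g y : Lplus e x -> Lplus g y -> Lplus (e <.> act x g) (x ** y).
Proof.
  intros [E1 E2] Hg. destruct (Lplus_act x Hg) as [F1 F2]. split.
  - rewrite mulI_assoc, F1; reflexivity.
  - rewrite <- (iplus_absorb_r x y) at 1. rewrite mulI_assoc, <- (mulI_assoc (iplus x)), E2.
    rewrite <- mulI_assoc, iplus_absorb_r. exact F2.
Qed.
Lemma Lplus_left_cancel e x k k' : Lplus e x ->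
  (e <.> k = e <.> k' <-> iplus x <.> k = iplus x <.> k').
Proof.
  intros [E1 E2]; split; intro E.
  - rewrite <- E2, !mulI_assoc, E; reflexivity.
  - rewrite <- E1, !mulI_assoc, E; reflexivity.
Qed.
Lemma Lplus_idem_act x e f : idem mul0 x -> Lplus e x -> Lplus f x -> e <.> act x f = e.
Proof.
  intros Ix [E1 _] Hf. destruct (Lplus_act x Hf) as [_ F2]. rewrite Ix in F2.
  exact (mulI_absorb_trans E1 F2).
Qed.
Lemma Lplus_unique a f g : idem mul0 f -> idem mul0 g -> Lplus a f -> Lplus a g -> f = g.
Proof.
  intros If Ig [E1 E2] [F1 F2]. unfold iplus in *. rewrite plus0_of_idem in E1, E2, F1, F2 by auto.
  apply iota_inj; auto.
  assert (G1 := mulI_absorb_trans E2 F1); assert (G2 := mulI_absorb_trans F2 E1).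
  rewrite <- iota_mul in G1, G2 by auto.
  rewrite <- G1, <- G2, idem0_comm; auto.
Qed.

Lemma mW_pair e x g y : mW (e, x) (g, y) = (e <.> act x g, x ** y).
Proof. reflexivity. Qed.

Lemma W_closed : closed_on W mW.
Proof.
  intros [e x] [g y] H1 H2. apply W_iff in H1; apply W_iff in H2.
  apply W_iff, Lplus_mulW; assumption.
Qed.

Lemma W_assoc : assoc_on W mW.
Proof.
  intros [e x] [g y] [h z] _ _ _. rewrite !mW_pair, act_mul, act_mulI, mulI_assoc, mul0_assoc.
  reflexivity.
Qed.

Lemma W_idem_iff e x : W (e, x) -> (idem mW (e, x) <-> idem mul0 x).
Proof.
  intro H; apply W_iff in H. unfold idem; rewrite mW_pair, pair_equal_spec.
  split; [tauto|]. intro Ix; split; [exact (Lplus_idem_act Ix H H) | exact Ix].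
Qed.

Definition embed (x : T0) : TI * T0 := (iplus x, x).

Lemma embed_W x : W (embed x).
Proof. apply W_iff, Lplus_iplus. Qed.
Lemma embed_inj x y : embed x = embed y -> x = y.
Proof. intro E; apply pair_equal_spec in E; tauto. Qed.
Lemma embed_mul x y : embed (x ** y) = mW (embed x) (embed y).
Proof. unfold embed; rewrite mW_pair, act_iplus, iplus_absorb_l; reflexivity. Qed.
Lemma embed_idem e : idem mul0 e -> idem mW (embed e).
Proof. apply W_idem_iff, embed_W. Qed.
Lemma embed_idem_comm e f : idem mul0 e -> idem mul0 f ->
  mW (embed e) (embed f) = mW (embed f) (embed e).
Proof. intros Ie If; rewrite <- !embed_mul, idem0_comm; auto. Qed.

Lemma W_Rstar_plus e x : Rstar W mW (e, x) (e, plus0 x).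
Proof.
  intros u v _ _.
  assert (K : forall z, lmul1 mW u (e, z) = lmul1 mW v (e, z) <->
            fst (lmul1 mW u (e, x)) = fst (lmul1 mW v (e, x)) /\
            lmul1 mul0 (option_map snd u) z = lmul1 mul0 (option_map snd v) z)
    by (intro z; destruct u as [[a y]|]; destruct v as [[b t]|]; apply pair_equal_spec).
  rewrite !K. destruct (plus0_spec x) as [_ [_ Hp]].
  specialize (Hp (option_map snd u) (option_map snd v) (opt_in_allT _) (opt_in_allT _)). tauto.
Qed.

Lemma star_cancel_iff x g y h z : Lplus g y -> Lplus h z ->
  (iplus x <.> act x g = iplus x <.> act x h /\ x ** y = x ** z <->
   iplus (star0 x) <.> act (star0 x) g = iplus (star0 x) <.> act (star0 x) h /\
   star0 x ** y = star0 x ** z).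
Proof.
  intros Hg Hh; split.
  - intros [E1 E2].
    apply Lplus_iff in Hg, Hh.
    destruct (act_cancel (plus0_spec x) (star0_spec x) (plus0_spec y) (plus0_spec z) Hg Hh E1 E2)
      as [-> ->].
    auto.
  - intros [E1 E2]. split.
    + apply (f_equal (act x)) in E1.
      rewrite !act_mulI, act_iplus, <- !act_mul, mul_star0 in E1. exact E1.
    + rewrite <- (mul_star0 x), !mul0_assoc, E2; reflexivity.
Qed.

Lemma W_Lstar_star e x : W (e, x) -> Lstar W mW (e, x) (embed (star0 x)).
Proof.
  intro He; apply W_iff in He. unfold embed.
  apply Lstar_of_right_unit with (r := embed (star0 x)); unfold embed.
  - apply embed_W.
  - rewrite mW_pair, act_iplus, mul_star0. f_equal. apply He.
  - apply embed_idem, star0_idem.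
  - intros [g y] [h z] Hg Hh. apply W_iff in Hg, Hh.
    rewrite !mW_pair, !pair_equal_spec, (Lplus_left_cancel (act x g) (act x h) He).
    exact (star_cancel_iff x Hg Hh).
Qed.

Lemma W_abundant : abundant W mW.
Proof.
  intros [e x] He. split.
  - exists (e, plus0 x).
    assert (Hp : W (e, plus0 x)) by (apply W_iff in He; apply W_iff, Lplus_plus0, He).
    split; [exact Hp|].
    split; [apply W_idem_iff; [exact Hp | apply plus0_idem] | apply W_Rstar_plus].
  - exists (embed (star0 x)). split; [apply embed_W|].
    split; [apply embed_idem, star0_idem | apply W_Lstar_star, He].
Qed.

Lemma W_idem_snd w : W w -> idem mW w -> idem mul0 (snd w).
Proof. destruct w as [e x]; intros H Iw; exact (proj1 (W_idem_iff H) Iw). Qed.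

Lemma W_left_adequate : left_adequate W mW.
Proof.
  split; [exact W_abundant|].
  intros a [e x] [f z] _ He Hf Ie If Re Rf.
  assert (Ix := W_idem_snd He Ie); assert (Iz := W_idem_snd Hf If); simpl in Ix, Iz.
  destruct (Rstar_idem_absorb (Rstar_trans (Rstar_sym Re) Rf) He Hf Ie If) as [E1 E2].
  rewrite !mW_pair, !pair_equal_spec in E1, E2.
  assert (Exz : x = z) by (rewrite <- (proj2 E1), idem0_comm, (proj2 E2); auto). subst z.
  apply W_iff in He; apply W_iff in Hf.
  f_equal. rewrite <- (proj1 E1). exact (Lplus_idem_act Ix Hf He).
Qed.

Lemma W_quasi_adequate : quasi_adequate W mW.
Proof.
  split; [exact W_abundant|].
  intros [e x] [f z] He Hf Ie If.
  apply W_idem_iff; [exact (W_closed He Hf)|].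
  apply idem0_mul; [exact (W_idem_snd He Ie) | exact (W_idem_snd Hf If)].
Qed.

Lemma mW_idem_absorb f a b : idem mul0 f -> Lplus a f -> Lplus b f -> mW (a, f) (b, f) = (a, f).
Proof. intros If Ha Hb. rewrite mW_pair, (Lplus_idem_act If Ha Hb), If; reflexivity. Qed.

Definition S0_copy (w : TI * T0) : Prop := fst w = iplus (snd w).

Lemma embed_S0_copy x : S0_copy (embed x).
Proof. reflexivity. Qed.
Lemma S0_copy_embed w : S0_copy w -> exists x, embed x = w.
Proof. destruct w as [e x]; intro H; exists x; unfold embed; rewrite H; reflexivity. Qed.
Lemma S0_copy_W w : S0_copy w -> W w.
Proof. intro H; destruct (S0_copy_embed H) as [x <-]; apply embed_W. Qed.

Lemma S0_copy_iso : iso_onto mul0 S0_copy mW.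
Proof.
  exists embed; split; [exact embed_S0_copy|]. split; [exact embed_inj|].
  split; [exact S0_copy_embed | exact embed_mul].
Qed.

Let embed_Lstar x y : Lstar allT mul0 x y <-> Lstar S0_copy mW (embed x) (embed y).
Proof. exact (Lstar_transport embed_S0_copy embed_inj S0_copy_embed embed_mul x y). Qed.
Let embed_Rstar x y : Rstar allT mul0 x y <-> Rstar S0_copy mW (embed x) (embed y).
Proof. exact (Rstar_transport embed_S0_copy embed_inj S0_copy_embed embed_mul x y). Qed.

Lemma S0_copy_plus_iff x p : is_plus S0_copy mW (embed x) p <-> p = embed (plus0 x).
Proof.
  split.
  - intro Hp. destruct (S0_copy_embed (proj1 Hp)) as [p' <-].
    apply (is_plus_transport embed_S0_copy embed_inj S0_copy_embed embed_mul) in Hp.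
    rewrite (plus0_unique Hp); reflexivity.
  - intros ->.
    apply (is_plus_transport embed_S0_copy embed_inj S0_copy_embed embed_mul), plus0_spec.
Qed.
Lemma S0_copy_star_iff x q : is_star S0_copy mW (embed x) q <-> q = embed (star0 x).
Proof.
  split.
  - intro Hq. destruct (S0_copy_embed (proj1 Hq)) as [q' <-].
    apply (is_star_transport embed_S0_copy embed_inj S0_copy_embed embed_mul) in Hq.
    rewrite (star0_unique Hq); reflexivity.
  - intros ->.
    apply (is_star_transport embed_S0_copy embed_inj S0_copy_embed embed_mul), star0_spec.
Qed.

Lemma W_is_plus_embed x : is_plus W mW (embed x) (embed (plus0 x)).
Proof.
  split; [apply embed_W|]. split; [apply embed_idem, plus0_idem|].
  unfold embed at 2; rewrite iplus_plus0. apply W_Rstar_plus.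
Qed.
Lemma W_is_star_embed x : is_star W mW (embed x) (embed (star0 x)).
Proof.
  split; [apply embed_W|]. split; [apply embed_idem, star0_idem|].
  apply W_Lstar_star, embed_W.
Qed.

Lemma W_Rstar_embed x y : Rstar W mW (embed x) (embed y) <-> plus0 x = plus0 y.
Proof.
  rewrite (Rstar_plus_iff (W_is_plus_embed x) (W_is_plus_embed y))
    by (apply embed_idem_comm; apply plus0_idem).
  split; [apply embed_inj | intros ->; reflexivity].
Qed.
Lemma W_Lstar_embed x y : Lstar W mW (embed x) (embed y) <-> star0 x = star0 y.
Proof.
  rewrite (Lstar_star_iff (W_is_star_embed x) (W_is_star_embed y))
    by (apply embed_idem_comm; apply star0_idem).
  split; [apply embed_inj | intros ->; reflexivity].
Qed.

Lemma S0_copy_star_subsemigroup : star_subsemigroup W mW S0_copy.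
Proof.
  split; [exact S0_copy_W|]. split.
  { intros a b Ha Hb. destruct (S0_copy_embed Ha) as [x <-]; destruct (S0_copy_embed Hb) as [y <-].
    rewrite <- embed_mul; apply embed_S0_copy. }
  split.
  { apply (abundant_transport embed_S0_copy embed_inj S0_copy_embed embed_mul), S0_adequate. }
  intros a b Ha Hb. destruct (S0_copy_embed Ha) as [x <-]; destruct (S0_copy_embed Hb) as [y <-].
  rewrite <- embed_Lstar, <- embed_Rstar, Lstar0_iff, Rstar0_iff, W_Lstar_embed, W_Rstar_embed.
  tauto.
Qed.

Lemma is_bar_embed e x : W (e, x) -> is_bar W mW S0_copy (e, x) (embed x).
Proof.
  intro He; apply W_iff in He; simpl in He.
  assert (Hp : Lplus e (plus0 x)) by exact (Lplus_plus0 He).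
  exists (e, plus0 x), (embed (star0 x)).
  apply (tdecomp_intro W_assoc S0_copy_W) with (p := embed (plus0 x)).
  - apply embed_S0_copy.
  - apply W_iff; exact Hp.
  - apply W_idem_iff; [apply W_iff; exact Hp | apply plus0_idem].
  - apply S0_copy_plus_iff; reflexivity.
  - apply S0_copy_star_iff; reflexivity.
  - unfold embed; rewrite iplus_plus0.
    apply mW_idem_absorb; [apply plus0_idem | exact Hp | apply Lplus_plus0, Lplus_iplus].
  - unfold embed; rewrite iplus_plus0, <- (iplus_plus0 x).
    apply mW_idem_absorb; [apply plus0_idem | apply Lplus_iplus | exact Hp].
  - unfold embed; rewrite mW_pair, act_iplus, plus0_mul, (proj1 He); reflexivity.
Qed.

Lemma is_bar_embed_inv w xb : is_bar W mW S0_copy w xb -> xb = embed (snd w).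
Proof.
  intros [[e z] [[f t] Hd]].
  destruct (tdecomp_absorb W_assoc S0_copy_W Hd) as [p [q [Hp [Hq [E1 [E2 [F1 F2]]]]]]].
  destruct Hd as [Uxb [He [Hf [Ie [If [-> _]]]]]].
  destruct (S0_copy_embed Uxb) as [y <-].
  apply S0_copy_plus_iff in Hp; apply S0_copy_star_iff in Hq; subst p q.
  unfold embed in E1, E2, F1, F2; rewrite mW_pair, pair_equal_spec in E1, E2, F1, F2.
  destruct E1 as [_ E1], E2 as [_ E2], F1 as [_ F1], F2 as [_ F2].
  apply W_idem_snd in Ie, If; auto; simpl in *.
  assert (Ez : z = plus0 y).
  { rewrite <- E1 at 1. rewrite idem0_comm by (auto; apply plus0_idem). exact E2. }
  assert (Et : t = star0 y).
  { rewrite <- F1 at 1. rewrite idem0_comm by (auto; apply star0_idem). exact F2. }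
  subst z t. simpl. rewrite plus0_mul, mul_star0; reflexivity.
Qed.

Lemma S0_copy_transversal : adequate_transversal W mW S0_copy.
Proof.
  split; [exact S0_copy_star_subsemigroup|].
  split; [apply (adequate_transport embed_S0_copy embed_inj S0_copy_embed embed_mul), S0_adequate|].
  intros [e x] Hw. exists (embed x). split; [exact (is_bar_embed Hw)|].
  intros xb Hb. exact (is_bar_embed_inv Hb).
Qed.

Lemma S0_copy_admissible : admissible W mW S0_copy.
Proof.
  intros [e x] [f y] xb yb Hx Hy Bx By.
  rewrite (is_bar_embed_inv Bx), (is_bar_embed_inv By); simpl.
  rewrite <- embed_mul, mW_pair. apply is_bar_embed.
  rewrite <- mW_pair; apply W_closed; assumption.
Qed.

Lemma S0_copy_left_ample : left_ample S0_copy mW.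
Proof.
  apply (left_ample_transport embed_S0_copy embed_inj S0_copy_embed embed_mul), S0_left_ample.
Qed.

Lemma I_set_iff k : I_set W mW S0_copy k <-> W k /\ idem mW k.
Proof.
  split.
  - intros [x [xb [f [_ [_ [Hk [_ [Ik _]]]]]]]]. auto.
  - destruct k as [a f]. intros [Hk Ik].
    assert (If := W_idem_snd Hk Ik); simpl in If.
    assert (Ha := Hk); apply W_iff in Ha; simpl in Ha.
    assert (Hf : Lplus (iplus f) f) by apply Lplus_iplus.
    exists (a, f), (embed f), (embed f). split; [exact Hk|].
    apply (tdecomp_intro W_assoc S0_copy_W) with (p := embed f); auto.
    + apply embed_S0_copy.
    + apply S0_copy_plus_iff; rewrite plus0_of_idem; auto.
    + apply S0_copy_star_iff; rewrite star0_of_idem; auto.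
    + apply mW_idem_absorb; auto.
    + apply mW_idem_absorb; auto.
    + symmetry; apply mW_idem_absorb; auto.
Qed.

Definition Lclass_of (a : TI) : T0 :=
  proj1_sig (constructive_indefinite_description _ (I_L_classes a)).

Lemma iplus_of_idem e : idem mul0 e -> iplus e = iota e.
Proof. intro Ie; unfold iplus; rewrite plus0_of_idem; auto. Qed.

Lemma Lclass_of_spec a : idem mul0 (Lclass_of a) /\ Lplus a (Lclass_of a).
Proof.
  unfold Lclass_of; destruct (constructive_indefinite_description _ _) as [e [Ie He]]; simpl.
  split; [exact Ie|]. apply Lplus_iff. rewrite iplus_of_idem; auto.
Qed.

Lemma I_set_iso : condition3 mul0 mulI iota act -> iso_onto mulI (I_set W mW S0_copy) mW.
Proof.
  intro cond3. exists (fun a => (a, Lclass_of a)).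
  assert (Wa : forall a, W (a, Lclass_of a)) by (intro a; apply W_iff, Lclass_of_spec).
  split; [|split; [|split]].
  - intro a; apply I_set_iff; split; [exact (Wa a)|].
    apply W_idem_iff; [exact (Wa a) | apply Lclass_of_spec].
  - intros a a' E; apply pair_equal_spec in E; tauto.
  - intros [a f] Hk. apply I_set_iff in Hk. destruct Hk as [Hk Ik].
    assert (If := W_idem_snd Hk Ik); apply W_iff in Hk; simpl in *.
    exists a. f_equal. destruct (Lclass_of_spec a). apply Lplus_unique with (a := a); auto.
  - intros a b. destruct (Lclass_of_spec a) as [Ia Ha]; destruct (Lclass_of_spec b) as [Ib Hb].
    assert (Hact : a <.> act (Lclass_of a) b = a <.> b).
    { rewrite (cond3 b (Lclass_of a) (Lclass_of a))
        by (split; [exact I | split; [exact Ia | apply Rstar_refl]]).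
      rewrite <- iplus_of_idem, <- mulI_assoc, (proj1 Ha) by exact Ia. reflexivity. }
    rewrite mW_pair, Hact. f_equal.
    apply Lplus_unique with (a := a <.> b);
      [apply Lclass_of_spec | apply idem0_mul; auto | apply Lclass_of_spec |].
    rewrite <- Hact. apply Lplus_mulW; auto.
Qed.

End Construction.

(** * Recovering the construction from [S] *)

Lemma sig_val_inj (A : Type) (Q : A -> Prop) (a b : {x | Q x}) :
  proj1_sig a = proj1_sig b -> a = b.
Proof. apply eq_sig_hprop; intros; apply proof_irrelevance. Qed.

Section Decomposition.
Variables (T : Type) (mul : T -> T -> T) (U : T -> Prop).
Hypothesis mulA : assoc_on allT mul.
Hypothesis S_left_adequate : left_adequate allT mul.
Hypothesis S_quasi_adequate : quasi_adequate allT mul.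
Hypothesis U_transversal : adequate_transversal allT mul U.
Hypothesis U_left_ample : left_ample U mul.
Hypothesis U_admissible : admissible allT mul U.

Local Notation "x ** y" := (mul x y) (at level 40, left associativity).

Let mul_assoc x y z : x ** y ** z = x ** (y ** z).
Proof. apply mulA; exact I. Qed.
Let mul_lmul1 u a b : lmul1 mul u (a ** b) = lmul1 mul u a ** b.
Proof. apply (@lmul1_mulA T allT mul); [exact mulA | apply opt_in_allT | exact I | exact I]. Qed.

Definition plusS (x : T) : T :=
  proj1_sig (constructive_indefinite_description _ (proj1 (proj1 S_left_adequate x I))).

Lemma plusS_spec x : idem mul (plusS x) /\ Rstar allT mul x (plusS x).
Proof.
  unfold plusS; destruct (constructive_indefinite_description _ _) as [p Hp]; exact (proj2 Hp).
Qed.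
Lemma plusS_idem x : idem mul (plusS x). Proof. apply plusS_spec. Qed.
Lemma plusS_Rstar x : Rstar allT mul x (plusS x). Proof. apply plusS_spec. Qed.
Lemma plusS_mul x : plusS x ** x = x.
Proof. exact (Rstar_idem_left (plusS_Rstar x) I (plusS_idem x)). Qed.
Lemma plusS_unique x e : idem mul e -> Rstar allT mul x e -> e = plusS x.
Proof.
  intros Ie Re.
  exact (proj2 S_left_adequate x e (plusS x) I I I Ie (plusS_idem x) Re (plusS_Rstar x)).
Qed.
Lemma plusS_of_idem e : idem mul e -> plusS e = e.
Proof. intro Ie; symmetry; apply plusS_unique; auto; apply Rstar_refl. Qed.

Lemma idem_mul e f : idem mul e -> idem mul f -> idem mul (e ** f).
Proof. intros; apply (proj2 S_quasi_adequate); auto; exact I. Qed.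

(** The idempotents form a left regular band: [e f] and [e f e] are idempotents
    in the same [R*]-class, which by left adequacy contains only one. *)
Lemma idem_left_regular e f : idem mul e -> idem mul f -> e ** f ** e = e ** f.
Proof.
  intros Ie If.
  assert (Ief := idem_mul Ie If). assert (Iefe := idem_mul Ief Ie).
  assert (Eef : e ** (e ** f) = e ** f) by (rewrite <- mul_assoc, Ie; reflexivity).
  symmetry.
  apply (proj2 S_left_adequate (e ** f) (e ** f) (e ** f ** e) I I I Ief Iefe (Rstar_refl _ _ _)).
  apply Rstar_of_absorb; try exact I; [exact mulA| |].
  - transitivity (e ** f ** (e ** (e ** f))); [rewrite !mul_assoc; reflexivity|].
    rewrite Eef; exact Ief.
  - rewrite <- mul_assoc, Ief; reflexivity.
Qed.

Lemma plusS_mul_plusS x a : plusS (x ** a) = plusS (x ** plusS a).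
Proof.
  apply plusS_unique; [apply plusS_idem|].
  apply (Rstar_trans (Rstar_sym (Rstar_mul_left x mulA (fun _ _ _ _ => I) I I I (plusS_Rstar a)))).
  apply plusS_Rstar.
Qed.
Lemma plusS_idem_mul g y : idem mul g -> plusS (g ** y) = g ** plusS y.
Proof.
  intro Ig. symmetry; apply plusS_unique; [apply idem_mul; auto; apply plusS_idem|].
  exact (Rstar_mul_left g mulA (fun _ _ _ _ => I) I I I (plusS_Rstar y)).
Qed.
Lemma plusS_mul_absorb x y : plusS x ** plusS (x ** y) = plusS (x ** y).
Proof.
  apply (Rstar_left_unit (plusS x) (plusS_Rstar (x ** y)) I).
  rewrite <- mul_assoc, plusS_mul; reflexivity.
Qed.

Lemma U_star_subsemigroup : star_subsemigroup allT mul U.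
Proof. exact (proj1 U_transversal). Qed.
Lemma U_adequate : adequate U mul.
Proof. exact (proj1 (proj2 U_transversal)). Qed.
Lemma U_closed : closed_on U mul.
Proof. apply U_star_subsemigroup. Qed.
Lemma U_abundant : abundant U mul.
Proof. apply U_star_subsemigroup. Qed.
Lemma U_Rstar_iff a b : U a -> U b -> (Rstar U mul a b <-> Rstar allT mul a b).
Proof. intros Ha Hb; apply (proj2 (proj2 (proj2 U_star_subsemigroup)) a b Ha Hb). Qed.
Lemma U_Lstar_iff a b : U a -> U b -> (Lstar U mul a b <-> Lstar allT mul a b).
Proof. intros Ha Hb; apply (proj2 (proj2 (proj2 U_star_subsemigroup)) a b Ha Hb). Qed.
Lemma U_is_plus u p : U u -> is_plus U mul u p -> p = plusS u.
Proof. intros Hu [Up [Ip Rp]]. apply plusS_unique; auto. apply U_Rstar_iff; auto. Qed.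
Lemma U_idem_is_plus e : U e -> idem mul e -> is_plus U mul e e.
Proof. intros; split; auto; split; auto; apply Rstar_refl. Qed.

Definition bar (x : T) : T :=
  proj1_sig (constructive_indefinite_description _ (proj2 (proj2 U_transversal) x I)).

Lemma bar_spec x : is_bar allT mul U x (bar x).
Proof.
  unfold bar; destruct (constructive_indefinite_description _ _) as [b Hb]; exact (proj1 Hb).
Qed.
Lemma bar_unique x xb : is_bar allT mul U x xb -> xb = bar x.
Proof.
  unfold bar; destruct (constructive_indefinite_description _ _) as [b Hb]; exact (proj2 Hb xb).
Qed.

Lemma tdecomp_inv x xb e f : tdecomp allT mul U x xb e f ->
  e = plusS x /\ x = e ** xb /\ exists p, is_plus U mul xb p /\ e ** p = e /\ p ** e = p.
Proof.
  intro Hd. destruct (tdecomp_absorb mulA (fun _ _ => I) Hd) as [p [q [Hp [Hq [E1 [E2 [F1 F2]]]]]]].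
  destruct Hd as [Uxb [_ [_ [Ie [If [Ex _]]]]]].
  destruct Hq as [Uq [Iq Lq]].
  (* [f R q] between idempotents of a left regular band forces [f = q] *)
  assert (Efq : f = q).
  { rewrite <- F1, <- (idem_left_regular Iq If), mul_assoc, F2. exact Iq. }
  subst f. rewrite mul_assoc, (Lstar_idem_right Lq Uq Iq) in Ex.
  assert (Hxp : Rstar allT mul xb p)
    by (apply U_Rstar_iff; [exact Uxb | exact (proj1 Hp) | apply Hp]).
  assert (Rxe : Rstar allT mul x e).
  { intros u v _ _. rewrite Ex, !mul_lmul1. split; intro E.
    - apply (Rstar_cancel (lmul1 mul u e) (lmul1 mul v e) Hxp I I) in E.
      rewrite <- !mul_lmul1, E1 in E. exact E.
    - rewrite E; reflexivity. }
  split; [apply plusS_unique; auto|]. split; [exact Ex|]. exists p; auto.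
Qed.

Lemma bar_decomp x : U (bar x) /\ x = plusS x ** bar x /\
  exists p, is_plus U mul (bar x) p /\ plusS x ** p = plusS x /\ p ** plusS x = p.
Proof.
  destruct (bar_spec x) as [e [f Hd]].
  split; [apply Hd|]. destruct (tdecomp_inv Hd) as [<- H]; exact H.
Qed.
Lemma U_bar x : U (bar x). Proof. apply bar_decomp. Qed.

Lemma bar_of_U u : U u -> bar u = u.
Proof.
  intro Hu. symmetry; apply bar_unique.
  destruct (U_abundant Hu) as [[p Hp] [q Hq]].
  destruct Hp as [Up [Ip Rp]].
  exists p, q. apply (tdecomp_intro mulA (fun _ _ => I)) with (p := p); auto; try exact I.
  - split; auto.
  - symmetry; exact (Rstar_idem_left Rp Up Ip).
Qed.
Lemma bar_mul x y : bar (x ** y) = bar x ** bar y.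
Proof. symmetry; apply bar_unique, U_admissible; try exact I; apply bar_spec. Qed.
Lemma bar_idem e : idem mul e -> idem mul (bar e).
Proof. intro Ie. unfold idem. rewrite <- bar_mul, Ie; reflexivity. Qed.
Lemma bar_idem_absorb e : idem mul e -> e ** bar e = e /\ bar e ** e = bar e.
Proof.
  intro Ie. destruct (bar_decomp e) as [Ub [_ [p [Hp E]]]].
  rewrite (is_plus_unique U_adequate Hp (U_idem_is_plus Ub (bar_idem Ie))), (plusS_of_idem Ie) in E.
  exact E.
Qed.

(** The left ample identity [x e = (x e)^+ x], stated in [U] only for idempotents of [U],
    extends to all idempotents [e] of [S] by passing through [bar e]. *)
Lemma left_ample_idem x e : U x -> idem mul e -> x ** e = plusS (x ** e) ** x.
Proof.
  intros Ux Ie.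
  assert (Ueb := U_bar e); assert (Ieb := bar_idem Ie).
  destruct (U_abundant (U_closed Ux Ueb)) as [[g Hg] _].
  assert (Eg : x ** bar e = g ** x) by exact (proj2 U_left_ample x (bar e) g Ux Ueb Ieb Hg).
  destruct (bar_decomp (x ** e)) as [_ [_ [p [Hp [E1 _]]]]].
  rewrite bar_mul, (bar_of_U Ux) in Hp. rewrite (is_plus_unique U_adequate Hp Hg) in E1.
  assert (Hx : plusS (x ** e) ** x = plusS (x ** e) ** x ** bar e)
    by (rewrite mul_assoc, Eg, <- mul_assoc, E1; reflexivity).
  rewrite <- (plusS_mul (x ** e)) at 1.
  rewrite <- mul_assoc, Hx, mul_assoc, (proj2 (bar_idem_absorb Ie)). reflexivity.
Qed.

Lemma plusS_mul_distr x e f : U x -> idem mul e -> idem mul f ->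
  plusS (x ** (e ** f)) = plusS (x ** e) ** plusS (x ** f).
Proof.
  intros Ux Ie If.
  rewrite <- mul_assoc, (left_ample_idem Ux Ie) at 1.
  rewrite mul_assoc. apply plusS_idem_mul, plusS_idem.
Qed.

Lemma bar_inverse a : idem mul a -> inverse_of mul a (bar a).
Proof.
  intro Ia. destruct (bar_idem_absorb Ia) as [E1 E2].
  split; [rewrite E1; exact Ia | rewrite E2; exact (bar_idem Ia)].
Qed.

(** In a left regular band mutual inverses are L-related; two L-related idempotents
    of the semilattice [U] coincide. *)
Lemma bar_inverse_unique a g : idem mul a -> U g -> idem mul g -> inverse_of mul a g -> g = bar a.
Proof.
  intros Ia Ug Ig [F1 F2].
  rewrite (idem_left_regular Ia Ig) in F1. rewrite (idem_left_regular Ig Ia) in F2.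
  destruct (bar_idem_absorb Ia) as [E1 E2].
  assert (G1 : g ** bar a = g) by (rewrite <- F2 at 1; rewrite mul_assoc, E1; exact F2).
  assert (G2 : bar a ** g = bar a) by (rewrite <- E2 at 1; rewrite mul_assoc, F1; exact E2).
  transitivity (g ** bar a); [symmetry; exact G1|]. rewrite <- G2 at 2.
  apply (proj2 U_adequate); auto; [apply U_bar | apply bar_idem; auto].
Qed.

(** The band [I] of the construction is the whole band of idempotents of [S]:
    every idempotent [e] of [S] is [e_e]. *)
Definition S0 := {x : T | U x}.
Definition mulS0 (a b : S0) : S0 :=
  exist _ (proj1_sig a ** proj1_sig b) (U_closed (proj2_sig a) (proj2_sig b)).
Definition ES := {e : T | idem mul e}.
Definition mulES (e f : ES) : ES :=
  exist _ (proj1_sig e ** proj1_sig f) (idem_mul (proj2_sig e) (proj2_sig f)).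
Definition iotaS (x : S0) : ES := exist _ (plusS (proj1_sig x)) (plusS_idem _).
Definition actS (x : S0) (e : ES) : ES :=
  exist _ (plusS (proj1_sig x ** proj1_sig e)) (plusS_idem _).

Let val_U (a : S0) : U (proj1_sig a). Proof. exact (proj2_sig a). Qed.
Let val_inj (a b : S0) : proj1_sig a = proj1_sig b -> a = b. Proof. apply sig_val_inj. Qed.
Let val_onto b : U b -> exists a : S0, proj1_sig a = b.
Proof. intro Hb; exists (exist _ b Hb); reflexivity. Qed.
Let val_mul (a b : S0) : proj1_sig (mulS0 a b) = proj1_sig a ** proj1_sig b.
Proof. reflexivity. Qed.

Lemma idem_S0 (a : S0) : idem mulS0 a <-> idem mul (proj1_sig a).
Proof. exact (idem_transport val_inj val_mul a). Qed.
Lemma is_plus_S0_iff (y p : S0) :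
  is_plus allT mulS0 y p <-> is_plus U mul (proj1_sig y) (proj1_sig p).
Proof. exact (is_plus_transport val_U val_inj val_onto val_mul y p). Qed.
Lemma is_plus_S0 (y p : S0) : is_plus allT mulS0 y p -> proj1_sig p = plusS (proj1_sig y).
Proof. intro H. apply is_plus_S0_iff in H. apply U_is_plus; auto. Qed.
Lemma is_star_S0 (y q : S0) : is_star allT mulS0 y q -> Lstar allT mul (proj1_sig y) (proj1_sig q).
Proof.
  intro H. apply (is_star_transport val_U val_inj val_onto val_mul) in H.
  apply U_Lstar_iff; auto; apply H.
Qed.
Lemma iotaS_val (e : S0) : idem mulS0 e -> proj1_sig (iotaS e) = proj1_sig e.
Proof. intro Ie; apply plusS_of_idem, idem_S0, Ie. Qed.

Lemma S0_assoc : assoc_on allT mulS0.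
Proof. intros a b c _ _ _; apply val_inj, mul_assoc. Qed.
Lemma S0_left_ample : left_ample allT mulS0.
Proof. apply (left_ample_transport val_U val_inj val_onto val_mul), U_left_ample. Qed.
Lemma ES_left_regular_band : left_regular_band mulES.
Proof.
  split; [|split].
  - intros a b c _ _ _; apply sig_val_inj, mul_assoc.
  - intro a; apply sig_val_inj, (proj2_sig a).
  - intros a b; apply sig_val_inj, idem_left_regular; apply proj2_sig.
Qed.
Lemma iotaS_mul e f : idem mulS0 e -> idem mulS0 f -> iotaS (mulS0 e f) = mulES (iotaS e) (iotaS f).
Proof.
  intros Ie If. apply idem_S0 in Ie, If. apply sig_val_inj; simpl.
  rewrite !plusS_of_idem; auto. apply idem_mul; auto.
Qed.
Lemma iotaS_inj e f : idem mulS0 e -> idem mulS0 f -> iotaS e = iotaS f -> e = f.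
Proof.
  intros Ie If E. apply val_inj. rewrite <- (iotaS_val Ie), <- (iotaS_val If), E; reflexivity.
Qed.

Definition barS (a : ES) : S0 := exist _ (bar (proj1_sig a)) (U_bar _).

Lemma ES_inverse a : exists e, idem mulS0 e /\ inverse_of mulES a (iotaS e) /\
  forall e', idem mulS0 e' -> inverse_of mulES a (iotaS e') -> e' = e.
Proof.
  assert (Ia := proj2_sig a).
  assert (Ib : idem mulS0 (barS a)) by (apply idem_S0, bar_idem, Ia).
  exists (barS a). split; [exact Ib|]. split.
  - destruct (bar_inverse Ia) as [E1 E2].
    split; apply sig_val_inj; simpl; rewrite plusS_of_idem by exact (bar_idem Ia); assumption.
  - intros e' Ie' [F1 F2]. apply val_inj; simpl.
    apply (f_equal (@proj1_sig _ _)) in F1, F2; simpl in F1, F2.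
    rewrite (plusS_of_idem (proj1 (idem_S0 e') Ie')) in F1, F2.
    apply bar_inverse_unique; [exact Ia | apply val_U | apply idem_S0, Ie' | split; assumption].
Qed.
Lemma ES_L_classes a : exists e, idem mulS0 e /\ Lgreen allT mulES a (iotaS e).
Proof.
  assert (Ia := proj2_sig a).
  assert (Ib : idem mulS0 (barS a)) by (apply idem_S0, bar_idem, Ia).
  exists (barS a). split; [exact Ib|].
  destruct (bar_idem_absorb Ia) as [E1 E2].
  exists (Some a), (Some (iotaS (barS a))); simpl.
  split; [exact I|]. split; [exact I|].
  split; apply sig_val_inj; simpl; rewrite plusS_of_idem by exact (bar_idem Ia);
    symmetry; assumption.
Qed.
Lemma actS_mul x y e : actS (mulS0 x y) e = actS x (actS y e).
Proof. apply sig_val_inj; simpl. rewrite mul_assoc. apply plusS_mul_plusS. Qed.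
Lemma actS_mulES x e f : actS x (mulES e f) = mulES (actS x e) (actS x f).
Proof.
  apply sig_val_inj; simpl.
  apply plusS_mul_distr; [apply val_U | apply proj2_sig | apply proj2_sig].
Qed.
Lemma actS_plus x y p q : is_plus allT mulS0 y p -> is_plus allT mulS0 (mulS0 x y) q ->
  actS x (iotaS p) = iotaS q.
Proof.
  intros Hp Hq. apply is_plus_S0 in Hp; apply is_plus_S0 in Hq; simpl in Hq.
  apply sig_val_inj; simpl.
  rewrite Hp, Hq, (plusS_of_idem (plusS_idem (proj1_sig y))),
    (plusS_of_idem (plusS_idem (proj1_sig x ** proj1_sig y))).
  symmetry; apply plusS_mul_plusS.
Qed.
Lemma actS_cancel x x1 x2 e1 e2 p p1 p2 s :
  is_plus allT mulS0 x p -> is_star allT mulS0 x s ->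
  is_plus allT mulS0 x1 p1 -> is_plus allT mulS0 x2 p2 ->
  Lgreen allT mulES e1 (iotaS p1) -> Lgreen allT mulES e2 (iotaS p2) ->
  mulES (iotaS p) (actS x e1) = mulES (iotaS p) (actS x e2) -> mulS0 x x1 = mulS0 x x2 ->
  actS s e1 = actS s e2 /\ mulS0 s x1 = mulS0 s x2.
Proof.
  intros Hp Hs _ _ _ _ E Ex. apply is_plus_S0 in Hp. apply is_star_S0 in Hs.
  apply (f_equal (@proj1_sig _ _)) in E, Ex; simpl in E, Ex.
  rewrite Hp, plusS_of_idem, !plusS_mul_absorb in E by apply plusS_idem.
  assert (E' : proj1_sig x ** proj1_sig e1 = proj1_sig x ** proj1_sig e2)
    by (rewrite (left_ample_idem (val_U x) (proj2_sig e1)),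
          (left_ample_idem (val_U x) (proj2_sig e2)), E; reflexivity).
  split; [apply sig_val_inj | apply val_inj]; simpl.
  - f_equal. exact (Lstar_cancel _ _ Hs I I E').
  - exact (Lstar_cancel _ _ Hs I I Ex).
Qed.

Lemma ES_construction_data : construction_data mulS0 mulES iotaS actS.
Proof.
  split; [exact S0_assoc|]. split; [exact S0_left_ample|]. split; [exact ES_left_regular_band|].
  split; [exact iotaS_mul|]. split; [exact iotaS_inj|]. split; [exact ES_inverse|].
  split; [exact ES_L_classes|]. split; [exact actS_mul|]. split; [exact actS_mulES|].
  split; [exact actS_plus | exact actS_cancel].
Qed.

Definition decompose (s : T) : ES * S0 :=
  (exist _ (plusS s) (plusS_idem s), exist _ (bar s) (U_bar s)).

Lemma decompose_W s : Wpred mulS0 mulES iotaS (decompose s).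
Proof.
  destruct (bar_decomp s) as [_ [_ [p [Hp [E1 E2]]]]].
  assert (Ip : idem mul p) by apply Hp.
  exists (exist _ p (proj1 Hp)). split.
  - apply is_plus_S0_iff; exact Hp.
  - exists (Some (exist _ (plusS s) (plusS_idem s))), (Some (iotaS (exist _ p (proj1 Hp)))); simpl.
    split; [exact I|]. split; [exact I|].
    split; apply sig_val_inj; simpl; rewrite (plusS_of_idem Ip); symmetry; assumption.
Qed.

Lemma decompose_inj s t : decompose s = decompose t -> s = t.
Proof.
  intro E. apply pair_equal_spec in E; destruct E as [E1 E2].
  apply (f_equal (@proj1_sig _ _)) in E1, E2; simpl in E1, E2.
  rewrite (proj1 (proj2 (bar_decomp s))), (proj1 (proj2 (bar_decomp t))), E1, E2; reflexivity.
Qed.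

Lemma decompose_onto w : Wpred mulS0 mulES iotaS w -> exists s, decompose s = w.
Proof.
  destruct w as [[e Ie] [x Ux]]. intros [p [Hp Lp]]; simpl in *.
  assert (Ep := is_plus_S0 Hp); simpl in Ep.
  apply is_plus_S0_iff in Hp.
  apply Lgreen_idem_iff in Lp; try exact I; try apply ES_left_regular_band.
  destruct Lp as [L1 L2]. apply (f_equal (@proj1_sig _ _)) in L1, L2; simpl in L1, L2.
  rewrite (plusS_of_idem (proj1 (proj2 Hp))) in L1, L2.
  destruct (U_abundant Ux) as [_ [q Hq]].
  assert (Hd : tdecomp allT mul U (e ** x) x e q)
    by (apply (tdecomp_intro mulA (fun _ _ => I)) with (p := proj1_sig p); auto; exact I).
  exists (e ** x). unfold decompose.
  destruct (tdecomp_inv Hd) as [Ee _].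
  assert (Eb : x = bar (e ** x)) by (apply bar_unique; exists e, q; exact Hd).
  f_equal; apply sig_val_inj; simpl; auto.
Qed.

Lemma decompose_mul s t : decompose (s ** t) = mulW mulS0 mulES actS (decompose s) (decompose t).
Proof.
  unfold decompose, mulW; simpl. f_equal; apply sig_val_inj; simpl.
  - rewrite (proj1 (proj2 (bar_decomp s))) at 1.
    rewrite mul_assoc, (plusS_idem_mul _ (plusS_idem s)), <- plusS_mul_plusS. reflexivity.
  - apply bar_mul.
Qed.

Lemma S_iso : iso_onto mul (Wpred mulS0 mulES iotaS) (mulW mulS0 mulES actS).
Proof.
  exists decompose. split; [exact decompose_W|]. split; [exact decompose_inj|].
  split; [exact decompose_onto | exact decompose_mul].
Qed.

End Decomposition.

Theorem theorem3p4 :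
  (forall (T0 : Type) (mul0 : T0 -> T0 -> T0) (TI : Type) (mulI : TI -> TI -> TI)
          (iota : T0 -> TI) (act : T0 -> TI -> TI),
     construction_data mul0 mulI iota act ->
     let P := Wpred mul0 mulI iota in
     let m := mulW mul0 mulI act in
     closed_on P m /\ assoc_on P m /\ left_adequate P m /\ quasi_adequate P m /\
     exists U : TI * T0 -> Prop,
       adequate_transversal P m U /\ admissible P m U /\ left_ample U m /\
       iso_onto mul0 U m /\
       (condition3 mul0 mulI iota act -> iso_onto mulI (I_set P m U) m)) /\
  (forall (T : Type) (mul : T -> T -> T) (U : T -> Prop),
     assoc_on allT mul -> left_adequate allT mul -> quasi_adequate allT mul ->
     adequate_transversal allT mul U -> left_ample U mul -> admissible allT mul U ->
     exists (T0 : Type) (mul0 : T0 -> T0 -> T0) (TI : Type) (mulI : TI -> TI -> TI)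
            (iota : T0 -> TI) (act : T0 -> TI -> TI),
       construction_data mul0 mulI iota act /\
       iso_onto mul (Wpred mul0 mulI iota) (mulW mul0 mulI act)).
Proof.
  split.
  - intros T0 mul0 TI mulI iota act
      [mul0A [S0_ample [[mulIA [mulI_idem _]] [iota_mul [iota_inj [_ [I_L_classes
        [act_mul [act_mulI [act_plus act_cancel]]]]]]]]]] P m.
    split; [eapply W_closed; eassumption|].
    split; [eapply W_assoc; eassumption|].
    split; [eapply W_left_adequate; eassumption|].
    split; [eapply W_quasi_adequate; eassumption|].
    exists (S0_copy iota S0_ample).
    split; [eapply S0_copy_transversal; eassumption|].
    split; [eapply S0_copy_admissible; eassumption|].
    split; [eapply S0_copy_left_ample; eassumption|].
    split; [eapply S0_copy_iso; eassumption|].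
    eapply I_set_iso; eassumption.
  - intros T mul U mulA S_ladeq S_qadeq U_trans U_ample U_adm.
    exists (S0 U), (mulS0 U_trans), (ES mul), (mulES S_qadeq), (iotaS S_ladeq), (actS S_ladeq).
    split; [eapply ES_construction_data | eapply S_iso]; eassumption.
Qed.
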